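(* Let $x,y,z,t$ be integers and put $n_1=2(xz+yt)$, $n_2=2(zt-xy)$, $n_3=x^2-y^2-z^2+t^2$. If $\gcd(n_1,n_2,n_3)=n>1$, then the quaternion $q=x+yi+zj+tk$ factors as $q=(x'+y'i+z'j+t'k)\,\eta$ with $x',y',z',t'\in\mathbb{Z}$ and $\eta\in\{1+i,\ 1+j,\ \alpha+\beta k\}$ for some integers $\alpha,\beta$ with $\alpha^2+\beta^2>1$.
   Context: Quaternions: $\mathbb{H}(\mathbb{R})$ is the real associative algebra with basis $1,i,j,k$ and $i^2=j^2=k^2=-1$, $ij=-ji=k$, $jk=-kj=i$, $ki=-ik=j$. Products are taken in this (noncommutative) algebra. *)

From mathcomp Require Import all_boot all_order all_algebra.
Set Implicit Arguments. Unset Strict Implicit. Unset Printing Implicit Defensive.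
Import Order.TTheory GRing.Theory Num.Theory.
Local Open Scope ring_scope.

(* Integral quaternions a + b i + c j + d k (a,b,c,d : int), i.e. the
   elements of H(R) with integer coordinates, with the Hamilton product
   (i^2 = j^2 = k^2 = -1, ij = -ji = k, jk = -kj = i, ki = -ik = j). *)
Record zquat := ZQuat { qre : int; qi : int; qj : int; qk : int }.

Definition qmul (a b : zquat) : zquat :=
  ZQuat (qre a * qre b - qi a * qi b - qj a * qj b - qk a * qk b)
        (qre a * qi b + qi a * qre b + qj a * qk b - qk a * qj b)
        (qre a * qj b - qi a * qk b + qj a * qre b + qk a * qi b)
        (qre a * qk b + qi a * qj b - qj a * qi b + qk a * qre b).

(* Write q = u + j v with u = x + t k and v = z + y k in the commutative
   ring Z[k], a copy of the Gaussian integers.  Then n3 = N u - N v and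
   n1, n2 are twice the coordinates of u v^*.  If n3 is even, then
   x + y + z + t is even and q is right divisible by 1 + i, 1 + j or 1 + k.
   If n3 is odd, then n = gcd (n1, n2, n3) is odd and divides u v^* and
   N u - N v; if u and v were coprime in Z[k] this would force n to divide
   u^* and v^*, hence 1.  So u and v have a common factor d with N d > 1,
   and q = (w1 + j w2) d. *)

From HB Require Import structures.
From mathcomp Require Import all_boot all_order all_algebra.
From mathcomp Require Import ring lra zify.
Set Implicit Arguments.
Unset Strict Implicit.
Unset Printing Implicit Defensive.
Import Order.TTheory GRing.Theory Num.Theory.
Local Open Scope ring_scope.

Record gaussint := Gauss { gre : int; gim : int }.

Definition gauss_pair (a : gaussint) := (gre a, gim a).
Definition pair_gauss (p : int * int) := Gauss p.1 p.2.
Lemma gauss_pairK : cancel gauss_pair pair_gauss. Proof. by case. Qed.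
HB.instance Definition _ := Equality.copy gaussint (can_type gauss_pairK).
HB.instance Definition _ := Choice.copy gaussint (can_type gauss_pairK).

Definition gadd a b := Gauss (gre a + gre b) (gim a + gim b).
Definition gopp a := Gauss (- gre a) (- gim a).

Lemma gaddA : associative gadd.
Proof. by move=> [? ?] [? ?] [? ?]; rewrite /gadd /= !addrA. Qed.
Lemma gaddC : commutative gadd.
Proof. by move=> [? ?] [? ?]; rewrite /gadd /=; congr Gauss; apply: addrC. Qed.
Lemma gadd0 : left_id (Gauss 0 0) gadd.
Proof. by move=> [? ?]; rewrite /gadd /= !add0r. Qed.
Lemma gaddN : left_inverse (Gauss 0 0) gopp gadd.
Proof. by move=> [? ?]; rewrite /gadd /= !addNr. Qed.
HB.instance Definition _ := GRing.isZmodule.Build gaussint gaddA gaddC gadd0 gaddN.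

Definition gmul a b :=
  Gauss (gre a * gre b - gim a * gim b) (gre a * gim b + gim a * gre b).

Lemma gmulA : associative gmul.
Proof. by move=> [? ?] [? ?] [? ?]; rewrite /gmul /=; congr Gauss; ring. Qed.
Lemma gmulC : commutative gmul.
Proof. by move=> [? ?] [? ?]; rewrite /gmul /=; congr Gauss; ring. Qed.
Lemma gmul1 : left_id (Gauss 1 0) gmul.
Proof. by move=> [? ?]; rewrite /gmul /=; congr Gauss; ring. Qed.
Lemma gmulDl : left_distributive gmul gadd.
Proof. by move=> [? ?] [? ?] [? ?]; rewrite /gmul /gadd /=; congr Gauss; ring. Qed.
Lemma gauss_oner_neq0 : Gauss 1 0 != 0. Proof. by []. Qed.
HB.instance Definition _ := GRing.Zmodule_isComNzRing.Build gaussint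
  gmulA gmulC gmul1 gmulDl gauss_oner_neq0.

Lemma gauss_eq (a b : gaussint) : gre a = gre b -> gim a = gim b -> a = b.
Proof. by case: a; case: b => ? ? ? ? /= -> ->. Qed.

Definition gaussE :=
  ((fun a b : gaussint => erefl : gre (a * b) = gre a * gre b - gim a * gim b),
   (fun a b : gaussint => erefl : gim (a * b) = gre a * gim b + gim a * gre b),
   (fun a b : gaussint => erefl : gre (a + b) = gre a + gre b),
   (fun a b : gaussint => erefl : gim (a + b) = gim a + gim b),
   (fun a : gaussint => erefl : gre (- a) = - gre a),
   (fun a : gaussint => erefl : gim (- a) = - gim a),
   (erefl : gre 1 = 1), (erefl : gim 1 = 0)).

Definition gscalar (n : int) := Gauss n 0.
Definition gconj (a : gaussint) := Gauss (gre a) (- gim a).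
Definition gnorm (a : gaussint) := gre a ^+ 2 + gim a ^+ 2.

Lemma gconjM a b : gconj (a * b) = gconj a * gconj b.
Proof. by apply: gauss_eq; rewrite /gconj !gaussE /=; ring. Qed.

Lemma gconjD a b : gconj (a + b) = gconj a + gconj b.
Proof. by apply: gauss_eq; rewrite /gconj !gaussE /=; ring. Qed.

Lemma gconjK : involutive gconj.
Proof. by move=> [? ?]; rewrite /gconj /= opprK. Qed.

Lemma gconj1 : gconj 1 = 1.
Proof. by apply: gauss_eq => //=; rewrite oppr0. Qed.

Lemma gconj_scalar n : gconj (gscalar n) = gscalar n.
Proof. by apply: gauss_eq => //=; rewrite oppr0. Qed.

Lemma mul_gconj a : a * gconj a = gscalar (gnorm a).
Proof. by apply: gauss_eq; rewrite /gconj /gnorm !gaussE /=; ring. Qed.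

Lemma gnormM a b : gnorm (a * b) = gnorm a * gnorm b.
Proof. by rewrite /gnorm !gaussE; ring. Qed.

Lemma gnorm_conj a : gnorm (gconj a) = gnorm a.
Proof. by rewrite /gnorm /gconj /=; ring. Qed.

Lemma gnorm_ge0 a : 0 <= gnorm a.
Proof. by rewrite /gnorm addr_ge0 // sqr_ge0. Qed.

Lemma gnorm_eq0 a : (gnorm a == 0) = (a == 0).
Proof.
apply/eqP/eqP => [|-> //]; rewrite /gnorm => /eqP.
rewrite paddr_eq0 ?sqr_ge0 // !sqrf_eq0 => /andP[/eqP re0 /eqP im0].
by apply: gauss_eq.
Qed.

Lemma gnorm_gt0 a : a != 0 -> 0 < gnorm a.
Proof. by move=> a0; rewrite lt_def gnorm_eq0 a0 gnorm_ge0. Qed.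

Definition gdvd (a b : gaussint) := exists w, b = a * w.

Lemma gdvd_mulr a b c : gdvd a b -> gdvd a (b * c).
Proof. by move=> [w ->]; exists (w * c); rewrite mulrA. Qed.

Lemma gdvdD a b c : gdvd a b -> gdvd a c -> gdvd a (b + c).
Proof. by move=> [w ->] [w' ->]; exists (w + w'); rewrite mulrDr. Qed.

Lemma gdvdN a b : gdvd a b -> gdvd a (- b).
Proof. by move=> [w ->]; exists (- w); rewrite mulrN. Qed.

Lemma gdvd_conj a b : gdvd a b -> gdvd (gconj a) (gconj b).
Proof. by move=> [w ->]; exists (gconj w); rewrite gconjM. Qed.

Lemma gdvd_lin G a b c e : gdvd G a -> gdvd G b -> gdvd G (a * c + b * e).
Proof. by move=> da db; apply: gdvdD; apply: gdvd_mulr. Qed.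

Lemma gdvd_scalar g a :
  gdvd (gscalar g) a <-> (g %| gre a)%Z /\ (g %| gim a)%Z.
Proof.
split=> [[w ->]|[/dvdzP[k1 e1] /dvdzP[k2 e2]]].
  by rewrite !gaussE /= !mul0r subr0 addr0; split; apply/dvdz_mulr/dvdzz.
exists (Gauss k1 k2); case: a e1 e2 => a1 a2 /= -> ->.
by apply: gauss_eq; rewrite !gaussE /=; ring.
Qed.

Lemma divz_nearest (p n : int) : 0 < n -> exists q, - n <= 2 * (p - n * q) < n.
Proof.
move=> n0; exists ((2 * p + n) %/ (2 * n))%Z.
have := divz_eq (2 * p + n) (2 * n).
have := @modz_ge0 (2 * p + n) (2 * n) (ltac:(lia)).
have := @ltz_pmod (2 * p + n) (2 * n) (ltac:(lia)).
lia.
Qed.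

Lemma gauss_euclid (a b : gaussint) : b != 0 ->
  exists q, gnorm (a - b * q) < gnorm b.
Proof.
move=> /gnorm_gt0 n0; set n := gnorm b in n0 *.
set c := a * gconj b.
have [q1 /andP[lo1 hi1]] := divz_nearest (gre c) n0.
have [q2 /andP[lo2 hi2]] := divz_nearest (gim c) n0.
exists (Gauss q1 q2).
have rem_conj : (a - b * Gauss q1 q2) * gconj b = c - gscalar n * Gauss q1 q2.
  by rewrite -mul_gconj /c; ring.
have norm_rem : gnorm (a - b * Gauss q1 q2) * n
    = (gre c - n * q1) ^+ 2 + (gim c - n * q2) ^+ 2.
  transitivity (gnorm ((a - b * Gauss q1 q2) * gconj b)).
    by rewrite gnormM gnorm_conj.
  by rewrite rem_conj /gnorm /gscalar !gaussE /=; ring.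
have := gnorm_ge0 (a - b * Gauss q1 q2).
nia.
Qed.

Lemma gauss_bezout (a b : gaussint) :
  exists d s r, d = a * s + b * r /\ gdvd d a /\ gdvd d b.
Proof.
have [N] : exists N : nat, gnorm b <= N%:Z.
  by exists `|gnorm b|%N; rewrite gez0_abs // gnorm_ge0.
elim: N a b => [|N IH] a b bN.
  have /eqP -> : b == 0 by rewrite -gnorm_eq0 eq_le bN gnorm_ge0.
  by exists a, 1, 0; split; [ring | split; [exists 1 | exists 0]; ring].
have [-> | b0] := eqVneq b 0.
  by exists a, 1, 0; split; [ring | split; [exists 1 | exists 0]; ring].
have [q ltq] := gauss_euclid a b0.
have [|d [s [r [-> [[w1 e1] [w2 e2]]]]]] := IH b (a - b * q); first lia.
exists (b * s + (a - b * q) * r), r, (s - q * r).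
split; first ring.
split; last by exists w1.
by exists (w2 + w1 * q); rewrite mulrDr -e2 mulrA -e1 subrK.
Qed.

(* Coprimality of u and v turns the two congruences into divisibility of
   v v^*, then of u u^*, then of u^* and v^*. *)
Lemma gdvd1_coprime (g : int) (u v s r : gaussint) :
  u * s + v * r = 1 ->
  gdvd (gscalar g) (u * gconj v) ->
  gdvd (gscalar g) (u * gconj u - v * gconj v) ->
  gdvd (gscalar g) 1.
Proof.
move=> bez duv dnorm; set G := gscalar g in duv dnorm *.
have dvu : gdvd G (gconj u * v).
  by have := gdvd_conj duv; rewrite gconj_scalar gconjM gconjK.
have dvv : gdvd G (v * gconj v).
  have -> : v * gconj v = u * gconj v * (v * s)
      + (gconj u * v * (u * r) + - (u * gconj u - v * gconj v) * (v * r)).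
    by rewrite -[LHS]mulr1 -bez; ring.
  by apply: gdvdD; [exact: gdvd_mulr | apply: gdvd_lin => //; apply: gdvdN].
have duu : gdvd G (u * gconj u).
  by rewrite -[u * _](subrK (v * gconj v)); apply: gdvdD.
have du' : gdvd G (gconj u).
  have -> : gconj u = u * gconj u * s + gconj u * v * r.
    by rewrite -[LHS]mulr1 -bez; ring.
  exact: gdvd_lin.
have dv' : gdvd G (gconj v).
  have -> : gconj v = u * gconj v * s + v * gconj v * r.
    by rewrite -[LHS]mulr1 -bez; ring.
  exact: gdvd_lin.
by rewrite -gconj1 -bez gconjD !gconjM; apply: gdvd_lin.
Qed.

Lemma gdvd_scalar1 (g : int) : 1 < g -> ~ gdvd (gscalar g) 1.
Proof. by move=> g1 /gdvd_scalar[]; rewrite dvdz1 /=; lia. Qed.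

Lemma gauss_common_factor (g : int) (u v : gaussint) : 1 < g ->
  gdvd (gscalar g) (u * gconj v) ->
  gdvd (gscalar g) (u * gconj u - v * gconj v) ->
  exists d w1 w2, u = w1 * d /\ v = w2 * d /\ 1 < gnorm d.
Proof.
move=> g1 duv dnorm.
have [d [s [r [bez [[w1 eu] [w2 ev]]]]]] := gauss_bezout u v.
have [nd1|nd] := lerP (gnorm d) 1; last first.
  by exists d, w1, w2; rewrite [w1 * _]mulrC [w2 * _]mulrC.
have [d0|/gnorm_gt0 nd0] := eqVneq d 0.
  by exists (Gauss 1 1), 0, 0; rewrite eu ev d0 !mul0r.
have dunit : d * gconj d = 1 by rewrite mul_gconj (_ : gnorm d = 1) //; lia.
exfalso; apply: (gdvd_scalar1 g1).
apply: (gdvd1_coprime (s := s * gconj d) (r := r * gconj d) _ duv dnorm).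
by rewrite !mulrA -mulrDl -bez.
Qed.

Lemma dvdz_half (g n a : int) :
  (g %| n)%Z -> ~~ (2 %| n)%Z -> (g %| 2 * a)%Z -> (g %| a)%Z.
Proof.
move=> gn n_odd g2a.
have n_eq : n = 2 * (n %/ 2)%Z + 1.
  have := divz_eq n 2; have := @modz_ge0 n 2 isT; have := @ltz_pmod n 2 isT.
  lia.
have -> : a = a * n - 2 * a * (n %/ 2)%Z.
  by set h := (n %/ 2)%Z in n_eq *; rewrite n_eq; ring.
by apply: rpredB; [exact: dvdz_mull | exact: dvdz_mulr].
Qed.

Definition has_special_right_factor (q : zquat) :=
  exists (x' y' z' t' : int) (eta : zquat),
    q = qmul (ZQuat x' y' z' t') eta /\
    [\/ eta = ZQuat 1 1 0 0,
        eta = ZQuat 1 0 1 0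
      | exists alpha beta : int,
          eta = ZQuat alpha 0 0 beta /\ 1 < alpha ^+ 2 + beta ^+ 2].

Lemma zquat_factor_1i (x y z t : int) : (2 %| x + y)%Z -> (2 %| z + t)%Z ->
  exists x' y' z' t', ZQuat x y z t = qmul (ZQuat x' y' z' t') (ZQuat 1 1 0 0).
Proof.
move=> /dvdzP[a exy] /dvdzP[b ezt]; exists a, (a - x), (b - t), b.
by rewrite /qmul /=; congr ZQuat; lia.
Qed.

Lemma zquat_factor_1j (x y z t : int) : (2 %| x + z)%Z -> (2 %| y + t)%Z ->
  exists x' y' z' t', ZQuat x y z t = qmul (ZQuat x' y' z' t') (ZQuat 1 0 1 0).
Proof.
move=> /dvdzP[a exz] /dvdzP[b eyt]; exists a, b, (a - x), (b - y).
by rewrite /qmul /=; congr ZQuat; lia.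
Qed.

Lemma zquat_factor_1k (x y z t : int) : (2 %| x + t)%Z -> (2 %| y + z)%Z ->
  exists x' y' z' t', ZQuat x y z t = qmul (ZQuat x' y' z' t') (ZQuat 1 0 0 1).
Proof.
move=> /dvdzP[a ext] /dvdzP[b eyz]; exists a, (b - z), b, (a - x).
by rewrite /qmul /=; congr ZQuat; lia.
Qed.

Lemma dvd2_pair_sums (x y z t : int) : (2 %| x + y + z + t)%Z ->
  [\/ (2 %| x + y)%Z /\ (2 %| z + t)%Z, (2 %| x + z)%Z /\ (2 %| y + t)%Z
    | (2 %| x + t)%Z /\ (2 %| y + z)%Z].
Proof.
move=> even_sum; have [xy|xy] := boolP (2 %| x + y)%Z; first by apply: Or31; lia.
have [xz|xz] := boolP (2 %| x + z)%Z; first by apply: Or32; lia.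
by apply: Or33; lia.
Qed.

Lemma dvd2_mul_pred (x : int) : (2 %| x * (x - 1))%Z.
Proof.
have [x_even|x_odd] := boolP (2 %| x)%Z; first exact: dvdz_mulr.
by apply: dvdz_mull; lia.
Qed.

Lemma dvd2_sum_sqr (x y z t : int) :
  (2 %| x ^+ 2 - y ^+ 2 - z ^+ 2 + t ^+ 2)%Z = (2 %| x + y + z + t)%Z.
Proof.
have := dvd2_mul_pred x; have := dvd2_mul_pred y.
have := dvd2_mul_pred z; have := dvd2_mul_pred t.
rewrite !expr2; lia.
Qed.

Lemma factor_even (x y z t : int) : (2 %| x + y + z + t)%Z ->
  has_special_right_factor (ZQuat x y z t).
Proof.
case/dvd2_pair_sums => [[/zquat_factor_1i f /f] | [/zquat_factor_1j f /f]
  | [/zquat_factor_1k f /f]] [x' [y' [z' [t' ->]]]]; exists x', y', z', t'.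
- by eexists; split; [reflexivity | apply: Or31].
- by eexists; split; [reflexivity | apply: Or32].
- by eexists; split; [reflexivity | apply: Or33; exists 1, 1].
Qed.

(* Read (a, b) as the quaternion a + j b with a, b in Z[k] ~ Z[i]; right
   multiplication by an element of Z[k] then acts on both components. *)
Lemma qmul_gauss_right (a b d : gaussint) :
  qmul (ZQuat (gre a) (gim b) (gre b) (gim a)) (ZQuat (gre d) 0 0 (gim d))
  = ZQuat (gre (a * d)) (gim (b * d)) (gre (b * d)) (gim (a * d)).
Proof. by rewrite /qmul !gaussE /=; congr ZQuat; ring. Qed.

Lemma factor_odd (g x y z t : int) : 1 < g ->
  (g %| 2 * (x * z + y * t))%Z -> (g %| 2 * (z * t - x * y))%Z ->
  (g %| x ^+ 2 - y ^+ 2 - z ^+ 2 + t ^+ 2)%Z ->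
  ~~ (2 %| x ^+ 2 - y ^+ 2 - z ^+ 2 + t ^+ 2)%Z ->
  has_special_right_factor (ZQuat x y z t).
Proof.
move=> g1 dn1 dn2 dn3 n3_odd.
pose u := Gauss x t; pose v := Gauss z y.
have duv : gdvd (gscalar g) (u * gconj v).
  apply/gdvd_scalar; rewrite !gaussE /=.
  by split; apply: (dvdz_half dn3 n3_odd); [move: dn1 | move: dn2];
    congr (_ %| _)%Z; ring.
have dnorm : gdvd (gscalar g) (u * gconj u - v * gconj v).
  apply/gdvd_scalar; rewrite !mul_gconj !gaussE /= subrr.
  by split; [move: dn3; congr (_ %| _)%Z; rewrite /gnorm /=; ring | exact: dvdz0].
have [d [w1 [w2 [eu [ev nd]]]]] := gauss_common_factor g1 duv dnorm.
exists (gre w1), (gim w2), (gre w2), (gim w1), (ZQuat (gre d) 0 0 (gim d)).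
split; last by apply: Or33; exists (gre d), (gim d).
by rewrite qmul_gauss_right -eu -ev.
Qed.

Theorem proposition2p9 (x y z t : int) :
  let n1 := 2 * (x * z + y * t) in
  let n2 := 2 * (z * t - x * y) in
  let n3 := x ^+ 2 - y ^+ 2 - z ^+ 2 + t ^+ 2 in
  (1 < gcdz (gcdz n1 n2) n3)%R ->
  exists (x' y' z' t' : int) (eta : zquat),
    ZQuat x y z t = qmul (ZQuat x' y' z' t') eta /\
    [\/ eta = ZQuat 1 1 0 0,
        eta = ZQuat 1 0 1 0
      | exists alpha beta : int,
          eta = ZQuat alpha 0 0 beta /\ 1 < alpha ^+ 2 + beta ^+ 2].
Proof.
move=> n1 n2 n3 g1.
have [n3_even|n3_odd] := boolP (2 %| n3)%Z.
  by apply: factor_even; rewrite -dvd2_sum_sqr.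
apply: (factor_odd g1 _ _ _ n3_odd).
- exact: dvdz_trans (dvdz_gcdl _ _) (dvdz_gcdl _ _).
- exact: dvdz_trans (dvdz_gcdl _ _) (dvdz_gcdr _ _).
- exact: dvdz_gcdr.
Qed.
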